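(* Suppose $\|\widehat\theta_t-\theta^*\|_{\Sigma_t}\le\beta_t$ for all $t\in[T]$ (with $\|\theta^*\|_2\le L_\theta$), and let $\lambda\ge L_\varphi^2$. Then $\sum_{k=1}^{K_T}\sum_{t=t_k}^{t_{k+1}-1}B^{1,t_k}_{s_t,a_t}\le\beta_T\Big(\big(\tfrac{32\beta_T}{\kappa}+\tfrac{128\sqrt2L_\varphi\eta}{\kappa\sqrt\lambda}\big)d\log\big(1+\tfrac{T\mathcal UL_\varphi^2}{\lambda d}\big)+2\sqrt{dT\log\big(1+\tfrac{T\mathcal UL_\varphi^2}{\lambda d}\big)}\Big)$.
   Context: Setting: MNL model with finite $\mathcal S,\mathcal A$, reachable sets $\mathcal S_{s,a}$, $\mathcal U=\max|\mathcal S_{s,a}|$, features $\varphi$, $p(s'\mid s,a,\theta)=\exp(\varphi(s,a,s')^\top\theta)/\sum_{s''\in\mathcal S_{s,a}}\exp(\varphi(s,a,s'')^\top\theta)$, true $\theta^*$; assumptions (A1) $\|\varphi\|_2\le L_\varphi$, $\|\theta^*\|_2\le L_\theta$, $\Theta=\{\|\theta\|_2\le L_\theta\}$; (A2) $\inf_{\theta\in\Theta}p(s'\mid s_t,a_t,\theta)p(s''\mid s_t,a_t,\theta)\ge\kappa\in(0,1)$ for all $t$, $s',s''\in\mathcal S_{s_t,a_t}$; (A3) each $\mathcal S_{s,a}$ has $s'$ with $\varphi(s,a,s')=0$. The trajectory $(s_t,a_t)_{t\le T}$ is generated by \texttt{UCMNLK}, which uses the online estimator ($\ell_t(\theta)=-\sum_{s'\in\mathcal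 S_{s_t,a_t}}\mathbf1\{s_{t+1}=s'\}\log p(s'\mid s_t,a_t,\theta)$, $\widehat\theta_1=0$, $\Sigma_1=\lambda I_d$, $\widehat\Sigma_t=\Sigma_t+\eta\nabla^2\ell_t(\widehat\theta_t)$, $\widehat\theta_{t+1}=\arg\min_{\theta\in\Theta}\{\nabla\ell_t(\widehat\theta_t)^\top(\theta-\widehat\theta_t)+\frac1{2\eta}\|\theta-\widehat\theta_t\|^2_{\widehat\Sigma_t}\}$, $\Sigma_{t+1}=\Sigma_t+\nabla^2\ell_t(\widehat\theta_{t+1})$, step size $\eta>0$) and splits time into episodes $k=1,\dots,K_T$ starting at $t_k$ ($t_1=1$, $t_{K_T+1}=T+1$), where a new episode starts as soon as $\det\Sigma_t>2\det\Sigma_{t_k}$. $\beta_t>0$ is the confidence radius, nondecreasing in $t$. $B^{1,t}_{s,a}=\beta_t\sum_{s'\in\mathcal S_{s,a}}p(s'\mid s,a,\widehat\theta_t)\|\varphi(s,a,s')-\sum_{s''\in\mathcal S_{s,a}}p(s''\mid s,a,\widehat\theta_t)\varphi(s,a,s'')\|_{\Sigma_t^{-1}}$. *)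

From HB Require Import structures.
From mathcomp Require Import all_boot all_order all_algebra.
From mathcomp Require Import reals.
From mathcomp.analysis Require Import sequences exp.
Set Implicit Arguments. Unset Strict Implicit. Unset Printing Implicit Defensive.
Import Order.TTheory GRing.Theory Num.Theory.
Local Open Scope ring_scope.

Section MNL.
Variables (R : realType) (S A : finType) (d : nat).

Definition dotv (u v : 'cV[R]_d) : R := \sum_i u i 0 * v i 0.
Definition norm2 (u : 'cV[R]_d) : R := Num.sqrt (dotv u u).
Definition msqnorm (M : 'M[R]_d) (u : 'cV[R]_d) : R := dotv u (M *m u).
Definition mnorm (M : 'M[R]_d) (u : 'cV[R]_d) : R := Num.sqrt (msqnorm M u).

Variables (Sr : S -> A -> {set S}) (phi : S -> A -> S -> 'cV[R]_d).

Definition mnl_p (s : S) (a : A) (th : 'cV[R]_d) (s' : S) : R :=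
  expR (dotv (phi s a s') th) /
  \sum_(s'' in Sr s a) expR (dotv (phi s a s'') th).

Definition mnl_mean (s : S) (a : A) (th : 'cV[R]_d) : 'cV[R]_d :=
  \sum_(s' in Sr s a) mnl_p s a th s' *: phi s a s'.

(* gradient of l_t(th) = - log p(s_next | s, a, th)  (closed form) *)
Definition loss_grad (s : S) (a : A) (s_next : S) (th : 'cV[R]_d) : 'cV[R]_d :=
  mnl_mean s a th - phi s a s_next.

(* Hessian of l_t at th (closed form; independent of the observed s_next) *)
Definition loss_hess (s : S) (a : A) (th : 'cV[R]_d) : 'M[R]_d :=
  \sum_(s' in Sr s a) mnl_p s a th s' *: (phi s a s' *m (phi s a s')^T)
  - mnl_mean s a th *m (mnl_mean s a th)^T.

Definition omd_obj (eta : R) (g : 'cV[R]_d) (Sig_hat : 'M[R]_d)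
  (th_t th : 'cV[R]_d) : R :=
  dotv g (th - th_t) + (2 * eta)^-1 * msqnorm Sig_hat (th - th_t).

(* B^{1,t}_{s,a} with beta = beta_t, Sig = Sigma_t, th = hat theta_t *)
Definition bonus1 (beta : R) (Sig : 'M[R]_d) (th : 'cV[R]_d) (s : S) (a : A) : R :=
  beta * \sum_(s' in Sr s a)
            mnl_p s a th s' * mnorm (invmx Sig) (phi s a s' - mnl_mean s a th).

Definition Umax : nat := \max_(sa : S * A) #|Sr sa.1 sa.2|.

End MNL.

(* Within an episode Sigma_t dominates Sigma_{t_k} while det Sigma_t <= 2 det Sigma_{t_k},
   so the frozen norm ||.||_{Sigma_{t_k}^-1} is at most sqrt 2 times ||.||_{Sigma_t^-1}.
   The bonus at the frozen estimate theta_{t_k} is then compared with the weighted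
   variance V_t = sum_i p_i(theta_{t+1}) ||phi_i - mu(theta_{t+1})||^2_{Sigma_t^-1}:
   moving the softmax weights and their mean from theta_{t_k} to theta_{t+1} costs
   ||theta_{t_k} - theta_{t+1}||_{Sigma_t} V_t / kappa, and that distance is bounded by
   the confidence radius plus one mirror-descent step.  Since Sigma_{t+1} - Sigma_t is
   exactly the covariance sum_i p_i z_i z_i^T behind V_t, the elliptical potential
   argument gives V_t <= 2 ln (det Sigma_{t+1} / det Sigma_t); Hadamard's inequality and
   AM-GM bound ln det Sigma_{T+1} by the trace, and Cauchy-Schwarz handles sum sqrt V_t. *)

From HB Require Import structures.
From mathcomp Require Import all_boot all_order all_algebra.
From mathcomp Require Import reals.
From mathcomp.analysis Require Import sequences exp.
From mathcomp Require Import ring lra.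
Import Order.TTheory GRing.Theory Num.Theory.
Local Open Scope ring_scope.
Set Implicit Arguments. Unset Strict Implicit. Unset Printing Implicit Defensive.

Section QuadraticForms.
Variables (R : realType) (n : nat).
Implicit Types (u v w x y : 'cV[R]_n) (M A B : 'M[R]_n).

Lemma dotvE u v : dotv u v = (u^T *m v) 0 0.
Proof. by rewrite /dotv !mxE; apply: eq_bigr => i _; rewrite mxE. Qed.

Lemma dotvC u v : dotv u v = dotv v u.
Proof. by rewrite /dotv; apply: eq_bigr => i _; rewrite mulrC. Qed.

Lemma dotvDl u v w : dotv (u + w) v = dotv u v + dotv w v.
Proof. by rewrite /dotv -big_split; apply: eq_bigr => i _; rewrite mxE mulrDl. Qed.

Lemma dotvDr u v w : dotv v (u + w) = dotv v u + dotv v w.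
Proof. by rewrite dotvC dotvDl !(dotvC v). Qed.

Lemma dotvZl c u v : dotv (c *: u) v = c * dotv u v.
Proof. by rewrite /dotv mulr_sumr; apply: eq_bigr => i _; rewrite mxE mulrA. Qed.

Lemma dotvZr c u v : dotv v (c *: u) = c * dotv v u.
Proof. by rewrite dotvC dotvZl dotvC. Qed.

Lemma dotvNl u v : dotv (- u) v = - dotv u v.
Proof. by rewrite -scaleN1r dotvZl mulN1r. Qed.

Lemma dotvNr u v : dotv v (- u) = - dotv v u.
Proof. by rewrite dotvC dotvNl dotvC. Qed.

Lemma dotvBl u v w : dotv (u - w) v = dotv u v - dotv w v.
Proof. by rewrite dotvDl dotvNl. Qed.

Lemma dotvBr u v w : dotv v (u - w) = dotv v u - dotv v w.
Proof. by rewrite dotvDr dotvNr. Qed.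

Lemma dotv0l v : dotv 0 v = 0.
Proof. by rewrite /dotv big1 // => i _; rewrite mxE mul0r. Qed.

Lemma dotv0r v : dotv v 0 = 0.
Proof. by rewrite dotvC dotv0l. Qed.

Lemma dotv_sumr (I : Type) (r : seq I) (P : pred I) (F : I -> 'cV[R]_n) v :
  dotv v (\sum_(i <- r | P i) F i) = \sum_(i <- r | P i) dotv v (F i).
Proof. exact: (big_morph (dotv v) (fun a b => dotvDr a v b) (dotv0r v)). Qed.

Lemma dotv_mulmx u v M : dotv u (M *m v) = dotv (M^T *m u) v.
Proof. by rewrite !dotvE trmx_mul trmxK mulmxA. Qed.

Lemma dotv_ge0 u : 0 <= dotv u u.
Proof. by rewrite /dotv sumr_ge0 // => i _; rewrite -expr2 sqr_ge0. Qed.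

Lemma dotv_gt0 u : u != 0 -> 0 < dotv u u.
Proof.
move=> u0; have [i ui0] : exists i, u i 0 != 0.
  apply/existsP; apply: contraR u0 => /existsPn u0; apply/eqP/matrixP => i j.
  by rewrite (ord1 j) mxE; exact/eqP/negPn/u0.
rewrite /dotv (bigD1 i) //= ltr_pwDl //; first by rewrite -expr2 exprn_even_gt0.
by apply: sumr_ge0 => j _; rewrite -expr2 sqr_ge0.
Qed.

Definition sym M := M^T = M.
Definition psd M := forall x, 0 <= msqnorm M x.
Definition spd M := [/\ sym M, psd M & 0 < \det M].

Lemma qf_symE M u v : sym M -> dotv u (M *m v) = dotv v (M *m u).
Proof. by move=> sM; rewrite dotv_mulmx sM dotvC. Qed.

Lemma qfD M x y : sym M ->
  msqnorm M (x + y) = msqnorm M x + 2 * dotv x (M *m y) + msqnorm M y.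
Proof.
by move=> sM; rewrite /msqnorm mulmxDr !dotvDl !dotvDr (qf_symE y x sM); ring.
Qed.

Lemma qfZ M c x : msqnorm M (c *: x) = c ^+ 2 * msqnorm M x.
Proof. by rewrite /msqnorm -scalemxAr dotvZl dotvZr mulrA -expr2. Qed.

Lemma qfN M x : msqnorm M (- x) = msqnorm M x.
Proof. by rewrite -scaleN1r qfZ sqrrN expr1n mul1r. Qed.

Lemma qfB M x y : sym M ->
  msqnorm M (x - y) = msqnorm M x - 2 * dotv x (M *m y) + msqnorm M y.
Proof. by move=> sM; rewrite qfD // qfN mulmxN dotvNr mulrN. Qed.

Lemma qf_addM A B x : msqnorm (A + B) x = msqnorm A x + msqnorm B x.
Proof. by rewrite /msqnorm mulmxDl dotvDr. Qed.

Lemma qf_scaleM c A x : msqnorm (c *: A) x = c * msqnorm A x.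
Proof. by rewrite /msqnorm -scalemxAl dotvZr. Qed.

Lemma qf_sumM (I : Type) (r : seq I) (P : pred I) (F : I -> 'M[R]_n) x :
  msqnorm (\sum_(i <- r | P i) F i) x = \sum_(i <- r | P i) msqnorm (F i) x.
Proof.
apply: (big_morph (fun M => msqnorm M x) (fun a b => qf_addM a b x)).
by rewrite /msqnorm mul0mx dotv0r.
Qed.

Lemma qf_scalar c x : msqnorm c%:M x = c * dotv x x.
Proof. by rewrite /msqnorm mul_scalar_mx dotvZr. Qed.

Lemma mul_rank1 v x : (v *m v^T) *m x = dotv v x *: v.
Proof. by rewrite -mulmxA [v^T *m x]mx11_scalar -dotvE -mul_mx_scalar. Qed.

Lemma qf_rank1 v x : msqnorm (v *m v^T) x = dotv v x ^+ 2.
Proof. by rewrite /msqnorm mul_rank1 dotvZr dotvC expr2. Qed.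

Lemma sym_rank1 v : sym (v *m v^T).
Proof. by rewrite /sym trmx_mul trmxK. Qed.

Lemma symD A B : sym A -> sym B -> sym (A + B).
Proof. by rewrite /sym linearD /= => -> ->. Qed.

Lemma symZ c A : sym A -> sym (c *: A).
Proof. by rewrite /sym linearZ /= => ->. Qed.

Lemma sym_scalar c : sym c%:M.
Proof. by rewrite /sym tr_scalar_mx. Qed.

Lemma psdD A B : psd A -> psd B -> psd (A + B).
Proof. by move=> pA pB x; rewrite qf_addM addr_ge0. Qed.

Lemma psd_rank1 c v : 0 <= c -> psd (c *: (v *m v^T)).
Proof. by move=> c0 x; rewrite qf_scaleM qf_rank1 mulr_ge0 // sqr_ge0. Qed.

Lemma spd_scalar c : 0 < c -> spd c%:M.
Proof.
move=> c0; split; first exact: sym_scalar.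
  by move=> x; rewrite qf_scalar mulr_ge0 ?dotv_ge0 ?ltW.
by rewrite det_scalar exprn_gt0.
Qed.

Lemma qf_cauchy_schwarz M x y : sym M -> psd M ->
  dotv x (M *m y) ^+ 2 <= msqnorm M x * msqnorm M y.
Proof.
move=> sM pM.
set a := msqnorm M x; set b := dotv x (M *m y); set c := msqnorm M y.
have discr r : 0 <= a + 2 * r * b + r ^+ 2 * c.
  have := pM (x + r *: y).
  by rewrite qfD // qfZ -scalemxAr dotvZr -/a -/c -/b mulrA.
have a0 : 0 <= a := pM x.
have c0 : 0 <= c := pM y.
have [c_eq0|c_neq0] := eqVneq c 0.
  have [->|b_neq0] := eqVneq b 0; first by rewrite c_eq0 expr0n mulr0.
  have := discr (- (a + 1) / (2 * b)).
  have -> : 2 * (- (a + 1) / (2 * b)) * b = - (a + 1) by field.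
  rewrite c_eq0 mulr0 addr0; lra.
have c_gt0 : 0 < c by rewrite lt_def c_neq0 c0.
have := discr (- (b / c)).
set u := b / c.
have -> : b = u * c by rewrite /u divfK.
move=> h; have : 0 <= a - u ^+ 2 * c by move: h; rewrite !expr2; lra.
move=> /(mulr_ge0 (ltW c_gt0)); rewrite !expr2; nra.
Qed.

Lemma spd_unit M : spd M -> M \in unitmx.
Proof. by case=> _ _ d0; rewrite unitmxE unitfE gt_eqF. Qed.

Lemma qf_inv M x : sym M -> M \in unitmx ->
  msqnorm (invmx M) x = msqnorm M (invmx M *m x).
Proof. by move=> sM uM; rewrite /msqnorm mulKVmx // dotvC. Qed.

Lemma sym_inv M : sym M -> sym (invmx M).
Proof. by rewrite /sym trmx_inv => ->. Qed.

Lemma psd_inv M : sym M -> psd M -> M \in unitmx -> psd (invmx M).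
Proof. by move=> sM pM uM x; rewrite qf_inv. Qed.

Lemma qf_inv_ge0 M x : spd M -> 0 <= msqnorm (invmx M) x.
Proof. by move=> spdM; case: (spdM) => sM pM _; exact: (psd_inv sM pM (spd_unit spdM)). Qed.

Lemma dotv_cauchy_schwarz_inv M u v : sym M -> psd M -> M \in unitmx ->
  dotv u v ^+ 2 <= msqnorm (invmx M) u * msqnorm M v.
Proof.
move=> sM pM uM.
have -> : dotv u v = dotv (invmx M *m u) (M *m v) by rewrite dotv_mulmx sM mulKVmx.
by rewrite qf_inv //; apply: qf_cauchy_schwarz.
Qed.

(* Fenchel duality of the two quadratic forms; equality at y = M^-1 x. *)
Lemma qf_inv_ge_dual M x y : sym M -> psd M -> M \in unitmx ->
  2 * dotv y x - msqnorm M y <= msqnorm (invmx M) x.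
Proof.
move=> sM pM uM.
by have := pM (y - invmx M *m x); rewrite qfB // mulKVmx // -qf_inv //; lra.
Qed.

Lemma qf_inv_antimono A B (c : R) x : sym A -> psd A -> A \in unitmx ->
  sym B -> B \in unitmx -> 0 < c ->
  (forall z, msqnorm A z <= c * msqnorm B z) ->
  msqnorm (invmx B) x <= c * msqnorm (invmx A) x.
Proof.
move=> sA pA uA sB uB c0 AleB.
set y := c^-1 *: (invmx B *m x); set b := msqnorm (invmx B) x.
have h1 := qf_inv_ge_dual x y sA pA uA.
have h2 := AleB y.
have e1 : dotv y x = c^-1 * b by rewrite /y /b dotvZl qf_inv // /msqnorm mulKVmx.
have e2 : msqnorm B y = c^-1 ^+ 2 * b by rewrite /y /b qfZ qf_inv.
have e3 : c * (c^-1 ^+ 2 * b) = c^-1 * b by field; rewrite gt_eqF.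
rewrite e1 in h1; rewrite e2 e3 in h2.
by rewrite -ler_pdivrMl // mulrC; lra.
Qed.

End QuadraticForms.

Lemma ln1Dx_ge_div (R : realType) (x : R) : 0 <= x -> x / (1 + x) <= ln (1 + x).
Proof.
move=> x0; have x1_gt0 : 0 < 1 + x by lra.
have := @le_ln1Dx R (- (x / (1 + x))).
have -> : 1 + - (x / (1 + x)) = (1 + x)^-1 by field; rewrite gt_eqF.
rewrite lnV ?posrE // => h.
suff : -1 < - (x / (1 + x)) by move/h; lra.
by rewrite ltrN2 ltr_pdivrMr // mul1r; lra.
Qed.

Section RankOneUpdate.
Variables (R : realType) (n : nat).
Implicit Types (v x : 'cV[R]_n) (A B C : 'M[R]_n).

Lemma det1_add_rank1 (u w : 'cV[R]_n) : \det (1%:M + u *m w^T) = 1 + dotv w u :> R.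
Proof.
pose N : 'M[R]_(1 + n) := block_mx 1%:M (- w^T) u 1%:M.
have E1 : N = block_mx 1%:M 0 u 1%:M *m block_mx 1%:M (- w^T) 0 (1%:M + u *m w^T).
  rewrite mulmx_block; congr block_mx;
    rewrite ?mul1mx ?mul0mx ?mulmx0 ?mulmx1 ?addr0 ?add0r //.
  by rewrite mulmxN addrC addrK.
have E2 : N = block_mx (1%:M + w^T *m u) (- w^T) 0 1%:M *m block_mx 1%:M 0 u 1%:M.
  rewrite mulmx_block; congr block_mx;
    rewrite ?mul1mx ?mul0mx ?mulmx0 ?mulmx1 ?addr0 ?add0r //.
  by rewrite mulNmx addrK.
have := congr1 determinant (etrans (esym E2) E1).
rewrite !det_mulmx !det_ublock !det_lblock !det1 !mul1r !mulr1 => <-.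
rewrite det_mx11 !mxE eqxx; congr (_ + _).
by rewrite /dotv; apply: eq_bigr => j _; rewrite mxE.
Qed.

Lemma det_add_rank1 A c v : A \in unitmx ->
  \det (A + c *: (v *m v^T)) = \det A * (1 + c * msqnorm (invmx A) v).
Proof.
move=> uA.
have -> : A + c *: (v *m v^T) = A *m (1%:M + (c *: (invmx A *m v)) *m v^T).
  rewrite mulmxDr mulmx1; congr (_ + _).
  by rewrite -scalemxAl -scalemxAr mulmxA mulKVmx.
by rewrite det_mulmx det1_add_rank1 dotvZr.
Qed.

Section Update.
Variables (A : 'M[R]_n) (c : R) (v : 'cV[R]_n).
Hypotheses (spdA : spd A) (c0 : 0 <= c).
Let B := A + c *: (v *m v^T).
Let a := msqnorm (invmx A) v.

Let a_ge0 : 0 <= a. Proof. exact: qf_inv_ge0. Qed.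
Let ca_ge0 : 0 <= c * a := mulr_ge0 c0 a_ge0.

Lemma spd_add_rank1 : spd B.
Proof.
case: spdA => sA pA dA; split.
- exact/symD/symZ/sym_rank1.
- exact/psdD/psd_rank1.
- by rewrite det_add_rank1 ?spd_unit // mulr_gt0 // -/a; move: ca_ge0; lra.
Qed.

Lemma qf_add_rank1 x : msqnorm B x = msqnorm A x + c * dotv v x ^+ 2.
Proof. by rewrite qf_addM qf_scaleM qf_rank1. Qed.

Lemma qf_add_rank1_le x : msqnorm B x <= (1 + c * a) * msqnorm A x.
Proof.
case: spdA => sA pA _; rewrite qf_add_rank1.
have := ler_wpM2l c0 (dotv_cauchy_schwarz_inv v x sA pA (spd_unit spdA)).
rewrite -/a; lra.
Qed.

Lemma qf_inv_add_rank1_ge x :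
  msqnorm (invmx A) x <= (1 + c * a) * msqnorm (invmx B) x.
Proof.
have [sB pB _] := spd_add_rank1; case: spdA => sA pA _.
have ca := ca_ge0.
have uA := spd_unit spdA.
set k := (1 + c * a)^-1.
have k_gt0 : 0 < k by rewrite invr_gt0; lra.
have hk : k * (1 + c * a) = 1 by rewrite mulVf // gt_eqF //; lra.
set al := msqnorm (invmx A) x; set ga := dotv v (invmx A *m x).
set y := k *: (invmx A *m x).
have h := qf_inv_ge_dual x y sB pB (spd_unit spd_add_rank1).
have e1 : dotv y x = k * al by rewrite /y dotvZl dotvC.
have e2 : msqnorm B y = k ^+ 2 * (al + c * ga ^+ 2).
  by rewrite /y qfZ qf_add_rank1 -qf_inv // dotvZr exprMn; ring.
rewrite e1 e2 in h.
have hcs : ga ^+ 2 <= a * al.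
  exact: qf_cauchy_schwarz (sym_inv sA) (psd_inv sA pA uA).
have hal : k * al <= msqnorm (invmx B) x.
  have e : k ^+ 2 * (al + c * (a * al)) = k * al.
    by transitivity (k * (k * (1 + c * a)) * al); [ring | rewrite hk mulr1].
  have : k ^+ 2 * (c * ga ^+ 2) <= k ^+ 2 * (c * (a * al)).
    by rewrite ler_wpM2l ?sqr_ge0 ?ler_wpM2l.
  by move: h e; rewrite !mulrDr; lra.
have ca1_ge0 : 0 <= 1 + c * a by lra.
have := ler_wpM2l ca1_ge0 hal.
by rewrite mulrA [_ * k]mulrC hk mul1r.
Qed.

(* Sherman-Morrison: ||v||^2_{B^-1} = a / (1 + c a). *)
Lemma qf_inv_add_rank1 : msqnorm (invmx B) v * (1 + c * a) = a.
Proof.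
set w := invmx B *m v.
have Bw : B *m w = v by rewrite /w mulKVmx //; apply/spd_unit/spd_add_rank1.
have Aw : A *m w = (1 - c * dotv v w) *: v.
  move: Bw; rewrite /B mulmxDl -scalemxAl mul_rank1 scalerA => e.
  by rewrite scalerBl scale1r -{1}e addrK.
have ew : w = (1 - c * dotv v w) *: (invmx A *m v).
  by rewrite scalemxAr -Aw mulKmx ?spd_unit.
have : dotv v w = (1 - c * dotv v w) * a by rewrite {1}ew dotvZr.
rewrite /msqnorm -/w /a /msqnorm; lra.
Qed.

Lemma ln_det_add_rank1_ge : c * msqnorm (invmx B) v <= ln (\det B) - ln (\det A).
Proof.
case: spdA => _ _ dA; have ca := ca_ge0.
rewrite det_add_rank1 ?spd_unit // -/a lnM ?posrE //; last by lra.
rewrite addrAC subrr add0r.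
have -> : c * msqnorm (invmx B) v = c * a / (1 + c * a).
  by rewrite -{1}qf_inv_add_rank1; field; rewrite gt_eqF //; lra.
exact: ln1Dx_ge_div.
Qed.

End Update.

(* Preserved by rank-one updates; together with a bound on det B / det A it
   compares the norms of A and B, and of their inverses, in both directions. *)
Definition det_sandwich A B :=
  [/\ spd A, spd B, (forall x, msqnorm A x <= msqnorm B x),
      (forall x, msqnorm B x * \det A <= \det B * msqnorm A x) &
      (forall x, msqnorm (invmx A) x * \det A <= \det B * msqnorm (invmx B) x)].

Lemma det_sandwich_refl A : spd A -> det_sandwich A A.
Proof. by move=> spdA; split=> // x; rewrite mulrC. Qed.

Lemma det_sandwich_trans A B C :
  det_sandwich A B -> det_sandwich B C -> det_sandwich A C.
Proof.
case=> spdA [_ _ dB] le1 ledet1 leinv1 [_ spdC le2 ledet2 leinv2].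
have dB0 := ltW dB; have [_ _ /ltW dA0] := spdA; have [_ _ /ltW dC0] := spdC.
split => // x.
- exact: le_trans (le1 x) (le2 x).
- rewrite -(ler_pM2r dB) mulrAC.
  apply: le_trans (ler_wpM2r dA0 (ledet2 x)) _.
  by rewrite -!mulrA ler_wpM2l // [X in _ <= X]mulrC.
- by apply: le_trans (leinv1 x) _; rewrite mulrC; apply: leinv2.
Qed.

Lemma det_sandwich_add_rank1 A c v : spd A -> 0 <= c ->
  det_sandwich A (A + c *: (v *m v^T)).
Proof.
move=> spdA c0; have [_ _ dA] := spdA.
split => // [|x|x|x].
- exact: spd_add_rank1.
- by rewrite qf_add_rank1 lerDl mulr_ge0 ?sqr_ge0.
- by rewrite det_add_rank1 ?spd_unit // -mulrA mulrC ler_pM2l ?qf_add_rank1_le.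
- by rewrite det_add_rank1 ?spd_unit // mulrC -mulrA ler_pM2l ?qf_inv_add_rank1_ge.
Qed.

Lemma det_sandwich_add_sum_rank1 (I : Type) (r : seq I) (c : I -> R)
    (v : I -> 'cV[R]_n) A :
  spd A -> (forall i, 0 <= c i) ->
  det_sandwich A (A + \sum_(i <- r) c i *: (v i *m (v i)^T)).
Proof.
elim: r A => [|i r IH] A spdA c0.
  by rewrite big_nil addr0; apply: det_sandwich_refl.
rewrite big_cons addrA; apply: det_sandwich_trans (det_sandwich_add_rank1 _ spdA (c0 i)) _.
by apply: IH => //; apply: spd_add_rank1.
Qed.

(* Each rank-one step is paid for by the log-determinant increment it causes,
   measured in the fixed norm of C as long as the final matrix is below s C. *)
Lemma elliptical_potential (I : Type) (r : seq I) (c : I -> R)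
    (v : I -> 'cV[R]_n) A C (s : R) :
  spd A -> (forall i, 0 <= c i) -> spd C -> 0 < s ->
  (forall x, msqnorm (A + \sum_(i <- r) c i *: (v i *m (v i)^T)) x <= s * msqnorm C x) ->
  \sum_(i <- r) c i * msqnorm (invmx C) (v i) <=
  s * (ln (\det (A + \sum_(i <- r) c i *: (v i *m (v i)^T))) - ln (\det A)).
Proof.
move=> + c0 spdC s0; have [sC _ _] := spdC.
elim: r A => [|i r IH] A spdA le_sC; first by rewrite !big_nil addr0 subrr mulr0.
rewrite big_cons; rewrite big_cons addrA in le_sC *.
set A' := A + c i *: (v i *m (v i)^T) in le_sC *.
have spdA' : spd A' by apply: spd_add_rank1.
have [sA' pA' _] := spdA'.
have le_A'C : forall z, msqnorm A' z <= s * msqnorm C z.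
  by move=> z; apply: le_trans (le_sC z); case: (det_sandwich_add_sum_rank1 r v spdA' c0).
have := qf_inv_antimono (v i) sA' pA' (spd_unit spdA') sC (spd_unit spdC) s0 le_A'C.
move=> /(ler_wpM2l (c0 i)) le_i.
have := ler_wpM2l (ltW s0) (ln_det_add_rank1_ge (v i) spdA (c0 i)).
have := IH A' spdA' le_sC; rewrite -/A' mulrCA in le_i *; lra.
Qed.

Lemma det_sandwich_qf_le A B c x : det_sandwich A B -> \det B <= c * \det A ->
  msqnorm B x <= c * msqnorm A x.
Proof.
case=> [[_ pA dA] _ _ leB _] detB; rewrite -(ler_pM2r dA).
apply: le_trans (leB x) _; rewrite mulrAC.
by apply: ler_wpM2r.
Qed.

Lemma det_sandwich_qf_inv_le A B c x : det_sandwich A B -> \det B <= c * \det A ->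
  msqnorm (invmx A) x <= c * msqnorm (invmx B) x.
Proof.
case=> [[_ _ dA] spdB _ _ leinv] detB; rewrite -(ler_pM2r dA).
apply: le_trans (leinv x) _; rewrite mulrAC.
by apply: ler_wpM2r => //; apply: qf_inv_ge0.
Qed.

End RankOneUpdate.

Section Hadamard.
Variable (R : realType).

Definition pd n (M : 'M[R]_n) := forall x, x != 0 -> 0 < msqnorm M x.

Lemma dotv_col m1 m2 (u1 w1 : 'cV[R]_m1) (u2 w2 : 'cV[R]_m2) :
  dotv (col_mx u1 u2) (col_mx w1 w2) = dotv u1 w1 + dotv u2 w2.
Proof. by rewrite !dotvE tr_col_mx mul_row_col mxE. Qed.

Lemma qf_delta n (M : 'M[R]_n) i : msqnorm M (delta_mx i 0) = M i i.
Proof. by rewrite /msqnorm dotvE trmx_delta mulmxA -rowE -colE !mxE. Qed.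

Lemma pd_diag_gt0 n (M : 'M[R]_n) i : pd M -> 0 < M i i.
Proof.
move=> pdM; rewrite -qf_delta pdM //; apply/eqP => /matrixP/(_ i 0).
by rewrite !mxE !eqxx /= => /eqP; rewrite oner_eq0.
Qed.

Lemma pd_schur n (M : 'M[R]_(1 + n)) : sym M -> pd M ->
  let a := M 0 0 in
  let Sc := drsubmx M - a^-1 *: (dlsubmx M *m ursubmx M) in
  [/\ \det M = a * \det Sc, sym Sc, pd Sc & forall i, Sc i i <= drsubmx M i i].
Proof.
move=> sM pdM a Sc.
have a_gt0 : 0 < a := pd_diag_gt0 0 pdM.
have ulM : ulsubmx M = a%:M.
  by rewrite [LHS]mx11_scalar !mxE /a (_ : lshift n 0 = 0) //; apply: val_inj.
have cE : dlsubmx M = (ursubmx M)^T by rewrite trmx_ursub sM.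
have Mcol (y : 'cV_1) (x : 'cV_n) :
    M *m col_mx y x =
      col_mx (a *: y + ursubmx M *m x) (dlsubmx M *m y + drsubmx M *m x).
  by rewrite -{1}(submxK M) mul_block_col ulM mul_scalar_mx.
have Mfact : M =
    block_mx 1%:M 0 (a^-1 *: dlsubmx M) 1%:M *m block_mx a%:M (ursubmx M) 0 Sc.
  rewrite -{1}(submxK M) ulM mulmx_block; congr block_mx;
    rewrite ?mul1mx ?mul0mx ?mulmx0 ?addr0 ?add0r //.
  - by rewrite mul_mx_scalar scalerA mulfV ?gt_eqF // scale1r.
  - by rewrite -scalemxAl /Sc addrC subrK.
split.
- by rewrite {1}Mfact det_mulmx det_lblock det_ublock !det1 !mul1r det_scalar1.
- by rewrite /sym /Sc linearB /= linearZ /= trmx_mul trmx_drsub trmx_dlsub trmx_ursub sM.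
- move=> x x0.
  have -> : msqnorm Sc x = msqnorm M (col_mx (- (a^-1 *: (ursubmx M *m x))) x).
    rewrite /msqnorm Mcol scalerN scalerA mulfV ?gt_eqF // scale1r addNr.
    rewrite dotv_col dotv0r add0r /Sc mulmxBl mulmxN -scalemxAr -scalemxAl.
    by rewrite -mulmxA addrC.
  by apply: pdM; rewrite col_mx_eq0 negb_and x0 orbT.
- move=> i; rewrite /Sc !mxE lerBlDr lerDl mulr_ge0 ?invr_ge0 ?(ltW a_gt0) // cE.
  by apply: sumr_ge0 => j _; rewrite !mxE -expr2 sqr_ge0.
Qed.

Lemma hadamard n (M : 'M[R]_n) : sym M -> pd M -> \det M <= \prod_i M i i.
Proof.
elim: n M => [|n IH] M sM pdM; first by rewrite det_mx00 big_ord0.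
move: M sM pdM; rewrite -[n.+1]/(1 + n)%N => M sM pdM.
have [detM sSc pdSc leSc] := pd_schur sM pdM.
rewrite detM big_ord_recl ler_pM2l ?(pd_diag_gt0 0 pdM) //.
apply: le_trans (IH _ sSc pdSc) _; apply: ler_prod => i _.
rewrite ltW ?(pd_diag_gt0 i pdSc) //=; apply: le_trans (leSc i) _.
by rewrite !mxE rshift1.
Qed.

Lemma ln_le_subr1 (x : R) : 0 < x -> ln x <= x - 1.
Proof. by move=> x0; have := @le_ln1Dx R (x - 1); rewrite addrCA subrr addr0; apply; lra. Qed.

Lemma ln_prod (I : Type) (r : seq I) (F : I -> R) :
  (forall i, 0 < F i) -> ln (\prod_(i <- r) F i) = \sum_(i <- r) ln (F i).
Proof.
move=> F_gt0; elim: r => [|i r IH]; first by rewrite !big_nil ln1.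
by rewrite !big_cons lnM ?IH // posrE // prodr_gt0.
Qed.

(* Hadamard, then AM-GM on the diagonal in the form ln y <= y - 1. *)
Lemma ln_det_le_trace n (M : 'M[R]_n) (tau : R) : (0 < n)%N -> sym M -> pd M ->
  0 < \det M -> \tr M <= tau -> ln (\det M) <= n%:R * ln (tau / n%:R).
Proof.
move=> n0 sM pdM detM trM.
have Mii_gt0 i : 0 < M i i := pd_diag_gt0 i pdM.
have n_gt0 : 0 < n%:R :> R by rewrite ltr0n.
have tr_gt0 : 0 < \tr M.
  case: n n0 M sM pdM detM trM Mii_gt0 n_gt0 => // n' _ M _ _ _ _ Mii_gt0 _.
  by rewrite /mxtrace big_ord_recl ltr_pwDl // sumr_ge0 // => i _; apply: ltW.
set mu := \tr M / n%:R.
have mu_gt0 : 0 < mu by rewrite divr_gt0.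
have ln_hadamard : ln (\det M) <= \sum_i ln (M i i).
  by rewrite -ln_prod // ler_ln ?posrE ?prodr_gt0 ?hadamard.
have amgm : \sum_i ln (M i i) <= n%:R * ln mu.
  have : \sum_i (ln (M i i) - ln mu) <= \sum_i (M i i / mu - 1).
    by apply: ler_sum => i _; rewrite -ln_div ?posrE // ln_le_subr1 ?divr_gt0.
  rewrite !sumrB -mulr_suml -/(mxtrace M) /mu !sumr_const card_ord.
  have -> : \tr M / (\tr M / n%:R) = n%:R by field; rewrite !gt_eqF.
  rewrite -[_ *+ n]mulr_natl; lra.
have : n%:R * ln mu <= n%:R * ln (tau / n%:R).
  by rewrite ler_pM2l // ler_ln ?posrE ?divr_gt0 ?ler_pM2r ?invr_gt0 //; lra.
lra.
Qed.

End Hadamard.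

Lemma weighted_cauchy_schwarz (R : realType) (I : Type) (r : seq I) (P : pred I)
    (w m : I -> R) :
  (forall i, P i -> 0 <= w i) ->
  (\sum_(i <- r | P i) w i * m i) ^+ 2 <=
  (\sum_(i <- r | P i) w i) * (\sum_(i <- r | P i) w i * m i ^+ 2).
Proof.
move=> w_ge0; elim: r => [|i r IH]; first by rewrite !big_nil expr0n /= mul0r.
rewrite !big_cons; case: ifP => // Pi.
set Swm := \sum_(j <- r | P j) w j * m j in IH *.
set Sw := \sum_(j <- r | P j) w j in IH *.
set Swm2 := \sum_(j <- r | P j) w j * m j ^+ 2 in IH *.
have Sw_ge0 : 0 <= Sw by apply: sumr_ge0.
have Swm2_ge0 : 0 <= Swm2 by apply: sumr_ge0 => j Pj; rewrite mulr_ge0 ?w_ge0 ?sqr_ge0.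
have wi_ge0 := w_ge0 i Pi.
have cross : 2 * m i * Swm <= Sw * m i ^+ 2 + Swm2.
  have rhs_ge0 : 0 <= Sw * m i ^+ 2 + Swm2 by rewrite addr_ge0 // mulr_ge0 ?sqr_ge0.
  have : 4 * m i ^+ 2 * Swm ^+ 2 <= 4 * m i ^+ 2 * (Sw * Swm2).
    by apply: ler_wpM2l => //; rewrite mulr_ge0 ?sqr_ge0.
  have := sqr_ge0 (Sw * m i ^+ 2 - Swm2).
  move: rhs_ge0; rewrite !expr2; nra.
have := ler_wpM2l wi_ge0 cross.
by move: IH; rewrite !expr2; nra.
Qed.

Lemma sum_sqrt_le (R : realType) (m n : nat) (V : nat -> R) (X : R) :
  (forall i, (m <= i < n)%N -> 0 <= V i) -> \sum_(m <= i < n) V i <= X ->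
  \sum_(m <= i < n) Num.sqrt (V i) <= Num.sqrt ((n - m)%:R * X).
Proof.
move=> V_ge0 sumV.
have := @weighted_cauchy_schwarz R _ (index_iota m n)
  (fun i => (m <= i < n)%N && true) (fun=> 1) (fun i => Num.sqrt (V i)) (fun _ _ => ler01).
rewrite -!big_nat_cond sumr_const_nat.
under eq_bigr do rewrite mul1r.
under [X in _ <= _ * X]eq_big_nat => i /V_ge0 Vi do rewrite mul1r sqr_sqrtr //.
move=> cs; have sum_ge0 : 0 <= \sum_(m <= i < n) Num.sqrt (V i).
  by rewrite big_nat_cond sumr_ge0 // => i _; apply: sqrtr_ge0.
rewrite -(ger0_norm sum_ge0) -sqrtr_sqr ler_wsqrtr //.
by apply: le_trans cs _; rewrite ler_wpM2l.
Qed.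

Section MatrixNorm.
Variables (R : realType) (n : nat).
Implicit Types (x y : 'cV[R]_n) (M : 'M[R]_n).

Lemma mnorm_ge0 M x : 0 <= mnorm M x.
Proof. exact: sqrtr_ge0. Qed.

Lemma mnorm_sqr M x : psd M -> mnorm M x ^+ 2 = msqnorm M x.
Proof. by move=> pM; rewrite sqr_sqrtr. Qed.

Lemma mnormZ M c x : mnorm M (c *: x) = `|c| * mnorm M x.
Proof. by rewrite /mnorm qfZ sqrtrM ?sqr_ge0 // sqrtr_sqr. Qed.

Lemma mnormN M x : mnorm M (- x) = mnorm M x.
Proof. by rewrite /mnorm qfN. Qed.

Lemma mnormB M x y : mnorm M (x - y) = mnorm M (y - x).
Proof. by rewrite -mnormN opprB. Qed.

Lemma abs_le_of_sqr (b c : R) : 0 <= c -> b ^+ 2 <= c ^+ 2 -> `|b| <= c.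
Proof. by move=> c0; rewrite -real_normK ?num_real // ler_sqr ?normr_ge0 ?nnegrE. Qed.

Lemma dotv_le_mnorm M x y : sym M -> psd M ->
  `|dotv x (M *m y)| <= mnorm M x * mnorm M y.
Proof.
move=> sM pM; apply: abs_le_of_sqr; first by rewrite mulr_ge0 ?mnorm_ge0.
by rewrite exprMn !mnorm_sqr //; apply: qf_cauchy_schwarz.
Qed.

Lemma dotv_le_mnorm_inv M x y : sym M -> psd M -> M \in unitmx ->
  `|dotv x y| <= mnorm (invmx M) x * mnorm M y.
Proof.
move=> sM pM uM; apply: abs_le_of_sqr; first by rewrite mulr_ge0 ?mnorm_ge0.
rewrite exprMn !mnorm_sqr //; last exact: psd_inv.
exact: dotv_cauchy_schwarz_inv.
Qed.

Lemma mnormD M x y : sym M -> psd M -> mnorm M (x + y) <= mnorm M x + mnorm M y.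
Proof.
move=> sM pM.
have := dotv_le_mnorm x y sM pM; have := ler_norm (dotv x (M *m y)).
have : mnorm M (x + y) ^+ 2 = mnorm M x ^+ 2 + 2 * dotv x (M *m y) + mnorm M y ^+ 2.
  by rewrite !mnorm_sqr // qfD.
have := mnorm_ge0 M (x + y); have := mnorm_ge0 M x; have := mnorm_ge0 M y.
rewrite !expr2; nra.
Qed.

Lemma mnorm_sum M (I : Type) (r : seq I) (P : pred I) (F : I -> 'cV[R]_n) :
  sym M -> psd M ->
  mnorm M (\sum_(i <- r | P i) F i) <= \sum_(i <- r | P i) mnorm M (F i).
Proof.
move=> sM pM; elim: r => [|i r IH].
  by rewrite !big_nil /mnorm /msqnorm mulmx0 dotv0r sqrtr0.
rewrite !big_cons; case: ifP => // _.
by apply: le_trans (mnormD _ _ sM pM) _; rewrite lerD2l.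
Qed.

Lemma norm2_mnorm x : norm2 x = mnorm 1%:M x.
Proof. by rewrite /mnorm /msqnorm mul1mx. Qed.

Lemma sym1 : sym (1%:M : 'M[R]_n).
Proof. exact: sym_scalar. Qed.

Lemma psd1 : psd (1%:M : 'M[R]_n).
Proof. by move=> x; rewrite qf_scalar mul1r dotv_ge0. Qed.

Lemma dotv_norm2 x : dotv x x = norm2 x ^+ 2.
Proof. by rewrite /norm2 sqr_sqrtr // dotv_ge0. Qed.

Lemma dotv_le_norm2 x y : `|dotv x y| <= norm2 x * norm2 y.
Proof. by have := dotv_le_mnorm x y sym1 psd1; rewrite mul1mx -!norm2_mnorm. Qed.

End MatrixNorm.

Arguments sym1 {R n}.
Arguments psd1 {R n}.

Section ScalarFacts.
Variable R : realType.

Lemma abs_sub_le_of_ratio (u v g b : R) : 0 <= u <= 1 -> 0 <= v <= 1 -> 0 < g ->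
  0 <= b -> 1 - b <= g^-1 -> u <= v * g -> v <= u * g -> `|u - v| <= b.
Proof.
move=> /andP[u0 u1] /andP[v0 v1] g0 b0 hg uv vu.
have ig0 : 0 <= g^-1 by rewrite invr_ge0 ltW.
have uv' : u * g^-1 <= v by have := ler_wpM2r ig0 uv; rewrite mulfK ?gt_eqF.
have vu' : v * g^-1 <= u by have := ler_wpM2r ig0 vu; rewrite mulfK ?gt_eqF.
rewrite ler_norml; apply/andP; split.
- by have := ler_wpM2l v0 hg; nra.
- by have := ler_wpM2l u0 hg; nra.
Qed.

Lemma pair_weight_le (kappa q q' x y : R) : 0 < kappa -> kappa <= q * q' ->
  kappa * (x ^+ 2 + x * y) <= q * q' * (3 / 2 * x ^+ 2 + 1 / 2 * y ^+ 2).
Proof.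
move=> k0 kq.
have amgm : x * y <= 1 / 2 * x ^+ 2 + 1 / 2 * y ^+ 2.
  by have := sqr_ge0 (x - y); rewrite !expr2; lra.
have rhs_ge0 : 0 <= 3 / 2 * x ^+ 2 + 1 / 2 * y ^+ 2.
  by have := sqr_ge0 x; have := sqr_ge0 y; lra.
apply: le_trans (ler_wpM2r rhs_ge0 kq); apply: ler_wpM2l; lra.
Qed.

Lemma ler_sum_mem (T : finType) (P : {pred T}) (F : T -> R) j : j \in P ->
  (forall k, k \in P -> 0 <= F k) -> F j <= \sum_(k in P) F k.
Proof.
move=> Pj F_ge0; rewrite (bigD1 j) //= lerDl.
by apply: sumr_ge0 => k /andP[Pk _]; apply: F_ge0.
Qed.

End ScalarFacts.

Section MNL.
Variables (R : realType) (S A : finType) (d : nat).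
Variables (Sr : S -> A -> {set S}) (phi : S -> A -> S -> 'cV[R]_d) (s0 : S) (a0 : A).

Local Notation I := (Sr s0 a0).
Local Notation ph := (phi s0 a0).
Local Notation p := (mnl_p Sr phi s0 a0).
Local Notation mu := (mnl_mean Sr phi s0 a0).

Definition feature_var (M : 'M[R]_d) (th : 'cV[R]_d) :=
  \sum_(i in I) p th i * msqnorm (invmx M) (ph i - mu th).

Hypothesis I_n0 : exists z, z \in I.

Lemma mnl_partition_gt0 (th : 'cV[R]_d) : 0 < \sum_(j in I) expR (dotv (ph j) th).
Proof.
case: I_n0 => z zI; rewrite (bigD1 z) //= ltr_pwDl ?expR_gt0 //.
by apply: sumr_ge0 => j _; apply: expR_ge0.
Qed.

Lemma mnl_p_gt0 th i : 0 < p th i.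
Proof. by rewrite /mnl_p divr_gt0 ?expR_gt0 ?mnl_partition_gt0. Qed.

Lemma mnl_p_ge0 th i : 0 <= p th i.
Proof. exact/ltW/mnl_p_gt0. Qed.

Lemma mnl_p_sum1 th : \sum_(i in I) p th i = 1.
Proof. by rewrite /mnl_p -mulr_suml mulfV // gt_eqF // mnl_partition_gt0. Qed.

Lemma mnl_p_le1 th i : i \in I -> p th i <= 1.
Proof.
by move=> iI; rewrite -(mnl_p_sum1 th); apply: ler_sum_mem => // j _; apply: mnl_p_ge0.
Qed.

Lemma feature_var_ge0 M th : spd M -> 0 <= feature_var M th.
Proof. by move=> spdM; apply: sumr_ge0 => i _; rewrite mulr_ge0 ?mnl_p_ge0 ?qf_inv_ge0. Qed.

Lemma loss_hess_cov th : loss_hess Sr phi s0 a0 th =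
  \sum_(i in I) p th i *: ((ph i - mu th) *m (ph i - mu th)^T).
Proof.
set m := mu th.
have e1 : \sum_(i in I) p th i *: (ph i *m m^T) = m *m m^T.
  by rewrite {2}/m /mnl_mean mulmx_suml; apply: eq_bigr => i _; rewrite scalemxAl.
have e2 : \sum_(i in I) p th i *: (m *m (ph i)^T) = m *m m^T.
  rewrite {3}/m /mnl_mean linear_sum /= mulmx_sumr; apply: eq_bigr => i _.
  by rewrite linearZ /= scalemxAr.
have e3 : \sum_(i in I) p th i *: (m *m m^T) = m *m m^T.
  by rewrite -scaler_suml mnl_p_sum1 scale1r.
have e i : p th i *: ((ph i - m) *m (ph i - m)^T) =
    p th i *: (ph i *m (ph i)^T) - p th i *: (ph i *m m^T)
    - p th i *: (m *m (ph i)^T) + p th i *: (m *m m^T).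
  by rewrite linearB /= mulmxBl !mulmxBr !scalerBr opprB addrA addrAC.
rewrite (eq_bigr _ (fun i _ => e i)) big_split /= !sumrB e1 e2 e3.
by rewrite /loss_hess -/m subrK.
Qed.

Lemma psd_loss_hess th : psd (loss_hess Sr phi s0 a0 th).
Proof.
move=> x; rewrite loss_hess_cov qf_sumM; apply: sumr_ge0 => i _.
exact: psd_rank1 (mnl_p_ge0 _ _) x.
Qed.

Variable (L : R).
Hypothesis phi_le : forall z, norm2 (ph z) <= L.

Lemma qf_loss_hess_le th x : msqnorm (loss_hess Sr phi s0 a0 th) x <= L ^+ 2 * dotv x x.
Proof.
rewrite /loss_hess /msqnorm mulmxBl dotvBr mulmx_suml dotv_sumr.
rewrite -/(msqnorm _ x) qf_rank1.
suff : \sum_(i in I) dotv x (p th i *: (ph i *m (ph i)^T) *m x) <= L ^+ 2 * dotv x x.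
  by have := sqr_ge0 (dotv (mu th) x); lra.
rewrite -[X in _ <= X]mul1r -(mnl_p_sum1 th) mulr_suml; apply: ler_sum => i _.
rewrite -scalemxAl dotvZr -/(msqnorm _ x) qf_rank1 ler_wpM2l ?mnl_p_ge0 //.
rewrite dotv_norm2 -exprMn -real_normK ?num_real // ler_sqr ?nnegrE ?normr_ge0 //.
  have := ler_wpM2r (sqrtr_ge0 (dotv x x)) (phi_le i).
  by apply: le_trans; apply: dotv_le_norm2.
by rewrite mulr_ge0 ?sqrtr_ge0 // (le_trans (sqrtr_ge0 _) (phi_le i)).
Qed.

Lemma tr_rank1 (u : 'cV[R]_d) : \tr (u *m u^T) = dotv u u.
Proof. by rewrite mxtrace_mulC /mxtrace big_ord1 -dotvE. Qed.

Lemma tr_loss_hess_le th : \tr (loss_hess Sr phi s0 a0 th) <= L ^+ 2.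
Proof.
rewrite /loss_hess raddfB /= raddf_sum /= tr_rank1.
suff : \sum_(i in I) \tr (p th i *: (ph i *m (ph i)^T)) <= L ^+ 2.
  by have := dotv_ge0 (mu th); lra.
rewrite -[X in _ <= X]mul1r -(mnl_p_sum1 th) mulr_suml.
apply: ler_sum => i _; rewrite mxtraceZ tr_rank1 ler_wpM2l ?mnl_p_ge0 //.
rewrite dotv_norm2 ler_sqr ?nnegrE ?sqrtr_ge0 //.
exact: le_trans (sqrtr_ge0 _) (phi_le i).
Qed.

Lemma mnl_mean_le th : norm2 (mu th) <= L.
Proof.
rewrite norm2_mnorm /mnl_mean; apply: le_trans (mnorm_sum _ _ _ sym1 psd1) _.
apply: (@le_trans _ _ (\sum_(i in I) p th i * L)); last first.
  by rewrite -mulr_suml mnl_p_sum1 mul1r.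
apply: ler_sum => i _.
by rewrite mnormZ ger0_norm ?mnl_p_ge0 // -norm2_mnorm ler_wpM2l ?mnl_p_ge0.
Qed.

Lemma loss_grad_le th z : norm2 (loss_grad Sr phi s0 a0 z th) <= 2 * L.
Proof.
rewrite norm2_mnorm /loss_grad; apply: le_trans (mnormD _ _ sym1 psd1) _.
by rewrite mnormN -!norm2_mnorm; have := mnl_mean_le th; have := phi_le z; lra.
Qed.


Lemma mnl_p_lipschitz th th' i b : i \in I -> 0 <= b ->
  (forall j, j \in I -> `|dotv (ph j - ph i) (th' - th)| <= b) ->
  `|p th' i - p th i| <= b.
Proof.
move=> iI b0 hb.
set del := fun j => dotv (ph j) th' - dotv (ph j) th.
set e := fun j => expR (dotv (ph j) th).
have eE j : expR (dotv (ph j) th') = e j * expR (del j).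
  by rewrite -expRD /del addrC subrK.
have delE j : del j - del i = dotv (ph j - ph i) (th' - th).
  by rewrite /del !dotvBl !dotvBr; ring.
set Z := \sum_(j in I) e j; set Z' := \sum_(j in I) expR (dotv (ph j) th').
have Z_gt0 : 0 < Z := mnl_partition_gt0 th.
have Z'_gt0 : 0 < Z' := mnl_partition_gt0 th'.
set g := expR b; set a := expR (del i).
have g_gt0 : 0 < g := expR_gt0 b.
have Z'_le : Z' <= a * g * Z.
  rewrite /Z' mulr_sumr; apply: ler_sum => j jI.
  rewrite eE [e j * _]mulrC ler_pM2r ?expR_gt0 // /a /g -expRD ler_expR.
  by have := hb j jI; rewrite -delE ler_norml => /andP[_]; lra.
have aZ_le : a * Z <= g * Z'.
  rewrite /Z' !mulr_sumr; apply: ler_sum => j jI.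
  rewrite eE mulrCA [a * e j]mulrC ler_pM2l ?expR_gt0 // /a /g -expRD ler_expR.
  by have := hb j jI; rewrite -delE ler_norml => /andP[+ _]; lra.
have p'E : p th' i * Z' = e i * a by rewrite /mnl_p divfK ?gt_eqF // eE.
have pE : p th i * Z = e i by rewrite /mnl_p divfK ?gt_eqF.
have ZZ_gt0 : 0 < Z' * Z by apply: mulr_gt0.
apply: (abs_sub_le_of_ratio _ _ g_gt0 b0).
- by rewrite mnl_p_ge0 mnl_p_le1.
- by rewrite mnl_p_ge0 mnl_p_le1.
- by rewrite /g -expRN; have := expR_ge1Dx (- b); lra.
- rewrite -(ler_pM2r ZZ_gt0).
  have -> : p th' i * (Z' * Z) = (p th' i * Z') * Z by ring.
  have -> : p th i * g * (Z' * Z) = (p th i * Z) * (g * Z') by ring.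
  by rewrite p'E pE -mulrA ler_pM2l ?expR_gt0.
- rewrite -(ler_pM2r ZZ_gt0).
  have -> : p th i * (Z' * Z) = (p th i * Z) * Z' by ring.
  have -> : p th' i * g * (Z' * Z) = (p th' i * Z') * (g * Z) by ring.
  by rewrite p'E pE -mulrA ler_pM2l ?expR_gt0 // mulrA.
Qed.

Lemma mnl_mean_sub th th' :
  mu th - mu th' = \sum_(j in I) (p th j - p th' j) *: (ph j - mu th).
Proof.
have e j : (p th j - p th' j) *: (ph j - mu th) =
    (p th j *: ph j - p th' j *: ph j) - (p th j - p th' j) *: mu th.
  by rewrite scalerBr scalerBl.
rewrite (eq_bigr _ (fun j _ => e j)) !sumrB -scaler_suml sumrB !mnl_p_sum1.
by rewrite subrr scale0r subr0.
Qed.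

Section Perturbation.
Variables (M : 'M[R]_d) (th th' : 'cV[R]_d) (kappa : R).
Hypotheses (spdM : spd M) (kappa_gt0 : 0 < kappa)
  (kappa_le : forall i j, i \in I -> j \in I -> kappa <= p th i * p th j).

Local Notation N := (mnorm (invmx M)).
Local Notation z i := (ph i - mu th).
Local Notation V := (feature_var M th).
Local Notation D := (mnorm M (th' - th)).

Let sM : sym M. Proof. by case: spdM. Qed.
Let pM : psd M. Proof. by case: spdM. Qed.
Let uM : M \in unitmx. Proof. exact: spd_unit. Qed.
Let sMi : sym (invmx M). Proof. exact: sym_inv. Qed.
Let pMi : psd (invmx M). Proof. exact: psd_inv. Qed.

Lemma sum_mnl_p_mnorm_le : \sum_(i in I) p th i * N (z i) <= Num.sqrt V.
Proof.
have := @weighted_cauchy_schwarz R S (index_enum S) (mem I) (p th) (fun i => N (z i))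
  (fun i _ => mnl_p_ge0 th i).
rewrite mnl_p_sum1 mul1r.
under [X in _ <= X]eq_bigr do rewrite mnorm_sqr //.
move=> cs; have sum_ge0 : 0 <= \sum_(i in I) p th i * N (z i).
  by apply: sumr_ge0 => i _; rewrite mulr_ge0 ?mnl_p_ge0 ?mnorm_ge0.
by rewrite -(ger0_norm sum_ge0) -sqrtr_sqr ler_wsqrtr.
Qed.

Lemma mnl_p_dist_le i : i \in I ->
  `|p th i - p th' i| <= D * \sum_(j in I) (N (z i) + N (z j)).
Proof.
move=> iI; rewrite distrC; apply: mnl_p_lipschitz => //.
  by rewrite mulr_ge0 ?mnorm_ge0 // sumr_ge0 // => j _; rewrite addr_ge0 ?mnorm_ge0.
move=> j jI; have -> : ph j - ph i = z j - z i by rewrite opprB addrA subrK.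
apply: le_trans (dotv_le_mnorm_inv _ _ sM pM uM) _; rewrite mulrC ler_wpM2l ?mnorm_ge0 //.
apply: le_trans (mnormD _ _ sMi pMi) _; rewrite mnormN addrC.
apply: (@ler_sum_mem _ _ _ (fun k => N (z i) + N (z k)) _ jI) => k _.
by rewrite addr_ge0 ?mnorm_ge0.
Qed.

Lemma sum_mnl_p_dist_le :
  kappa * \sum_(j in I) `|p th j - p th' j| * N (z j) <= 2 * D * V.
Proof.
have VE : \sum_(i in I) p th i * N (z i) ^+ 2 = V.
  by apply: eq_bigr => i _; rewrite mnorm_sqr.
have dist_le : \sum_(j in I) `|p th j - p th' j| * N (z j) <=
    D * \sum_(i in I) \sum_(j in I) (N (z i) ^+ 2 + N (z i) * N (z j)).
  rewrite mulr_sumr; apply: ler_sum => i iI.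
  apply: le_trans (ler_wpM2r (mnorm_ge0 _ _) (mnl_p_dist_le iI)) _.
  rewrite -mulrA mulr_suml ler_wpM2l ?mnorm_ge0 //.
  by under eq_bigr do rewrite mulrDl -expr2 mulrC.
(* Each pair (i, j) carries weight at least kappa, and the weights sum to 1. *)
have pairs_le : kappa * \sum_(i in I) \sum_(j in I) (N (z i) ^+ 2 + N (z i) * N (z j))
    <= 2 * V.
  rewrite mulr_sumr.
  apply: (@le_trans _ _ (\sum_(i in I) \sum_(j in I)
      (p th i * p th j * (3 / 2 * N (z i) ^+ 2 + 1 / 2 * N (z j) ^+ 2)))).
    apply: ler_sum => i iI; rewrite mulr_sumr; apply: ler_sum => j jI.
    exact: pair_weight_le kappa_gt0 (kappa_le iI jI).
  under eq_bigr => i _.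
    rewrite (eq_bigr (fun j => 3 / 2 * (p th i * N (z i) ^+ 2) * p th j
                   + 1 / 2 * p th i * (p th j * N (z j) ^+ 2))); last by move=> j _; ring.
    rewrite big_split /= -!mulr_sumr mnl_p_sum1 mulr1 VE.
  over.
  by rewrite big_split /= -mulr_sumr -mulr_suml -mulr_sumr VE mnl_p_sum1; lra.
apply: le_trans (ler_wpM2l (ltW kappa_gt0) dist_le) _.
have := ler_wpM2l (mnorm_ge0 M (th' - th)) pairs_le.
set X := \sum_(i in I) _.
have -> : 2 * D * V = D * (2 * V) by ring.
by have -> : kappa * (D * X) = D * (kappa * X) by ring.
Qed.

(* The bonus at th' is compared to the variance at th by moving both the
   weights and the centring point; each move costs E = sum |p th - p th'| N(z). *)
Lemma mnl_centered_mnorm_le :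
  \sum_(i in I) p th' i * N (ph i - mu th') <= Num.sqrt V + 4 * D * V / kappa.
Proof.
pose E := \sum_(j in I) `|p th j - p th' j| * N (z j).
have E_ge0 : 0 <= E by apply: sumr_ge0 => j _; rewrite mulr_ge0 ?mnorm_ge0.
have mu_shift : N (mu th - mu th') <= E.
  rewrite mnl_mean_sub; apply: le_trans (mnorm_sum _ _ _ sMi pMi) _.
  by apply: ler_sum => j _; rewrite mnormZ.
have recentre : \sum_(i in I) p th' i * N (ph i - mu th') <=
    \sum_(i in I) p th' i * N (z i) + E.
  rewrite -[E]mul1r -(mnl_p_sum1 th') mulr_suml -big_split /=.
  apply: ler_sum => i _; rewrite -mulrDr ler_wpM2l ?mnl_p_ge0 //.
  have -> : ph i - mu th' = z i + (mu th - mu th') by rewrite addrA subrK.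
  by apply: le_trans (mnormD _ _ sMi pMi) _; rewrite lerD2l.
have reweight : \sum_(i in I) p th' i * N (z i) <= \sum_(i in I) p th i * N (z i) + E.
  rewrite /E -big_split /=; apply: ler_sum => i _.
  by rewrite -mulrDl ler_wpM2r ?mnorm_ge0 // ler_distlCDr.
have E_le : E <= 2 * D * V / kappa by rewrite ler_pdivlMr // mulrC sum_mnl_p_dist_le.
have -> : 4 * D * V / kappa = 2 * D * V / kappa + 2 * D * V / kappa by ring.
apply: le_trans recentre _; apply: le_trans (lerD reweight (lexx E)) _.
by rewrite -addrA; apply: lerD; [exact: sum_mnl_p_mnorm_le | exact: lerD].
Qed.

End Perturbation.

End MNL.

Section RegretArithmetic.
Variable R : realType.

Lemma sqrt_le_of_quadratic (X x c lam : R) : 0 < lam -> 0 <= c -> 0 <= x ->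
  X <= c * x -> lam * x ^+ 2 <= X -> Num.sqrt X <= c / Num.sqrt lam.
Proof.
move=> lam_gt0 c0 x0 Xle Xge.
have X0 : 0 <= X by apply: le_trans Xge; rewrite mulr_ge0 ?sqr_ge0 // ltW.
have lamX : lam * X <= c ^+ 2.
  have [->|X_neq0] := eqVneq X 0; first by rewrite mulr0 sqr_ge0.
  have X_gt0 : 0 < X by rewrite lt_def X_neq0 X0.
  have X2_le : X ^+ 2 <= (c * x) ^+ 2 by rewrite !expr2; apply: ler_pM.
  have : lam * X ^+ 2 <= c ^+ 2 * X.
    apply: le_trans (ler_wpM2l (ltW lam_gt0) X2_le) _.
    by rewrite exprMn mulrCA; apply: ler_wpM2l; [apply: sqr_ge0 | apply: Xge].
  by move=> h; rewrite -(ler_pM2r X_gt0); move: h; rewrite expr2 mulrA.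
have slam_gt0 : 0 < Num.sqrt lam by rewrite sqrtr_gt0.
have rhs_ge0 : 0 <= c / Num.sqrt lam by rewrite divr_ge0 ?sqrtr_ge0.
rewrite -(ger0_norm rhs_ge0) -sqrtr_sqr ler_wsqrtr //.
rewrite exprMn exprVn sqr_sqrtr; last exact: ltW.
by rewrite ler_pdivlMr // mulrC.
Qed.

Lemma sqrt_le_sqrt2M (x y : R) : 0 <= y -> x <= 2 * y ->
  Num.sqrt x <= Num.sqrt 2 * Num.sqrt y.
Proof. by move=> y0 h; rewrite -sqrtrM ?ler0n // ler_wsqrtr. Qed.

Lemma regret_arith (b bt r2 sl k dd l TT e L SV SSQ : R) :
  0 <= bt -> bt <= b -> r2 ^+ 2 = 2 -> 0 <= r2 -> 0 < sl -> 0 < k -> 0 <= dd ->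
  0 <= l -> 0 <= TT -> 0 < e -> 0 <= L -> 0 <= SV ->
  SV <= 2 * (dd * l) -> SSQ <= Num.sqrt (TT * (2 * (dd * l))) ->
  b * (r2 * SSQ + 4 * r2 * ((r2 + 1) * bt + 4 * e * L / sl) / k * SV) <=
  b * ((32 * b / k + 128 * r2 * L * e / (k * sl)) * dd * l
       + 2 * Num.sqrt (dd * TT * l)).
Proof.
move=> bt0 bt_le r2E r20 sl0 k0 d0 l0 T0 e0 L0 SV0 SV_le SSQ_le.
have b0 : 0 <= b by apply: le_trans bt_le.
apply: ler_wpM2l => //.
have r2_le2 : r2 <= 2 by move: r2E; rewrite expr2 => h; nra.
have w0 : 0 <= e * L / sl := divr_ge0 (mulr_ge0 (ltW e0) L0) (ltW sl0).
set w := e * L / sl in w0.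
have C0 : 0 <= 4 * r2 * ((r2 + 1) * bt + 4 * w) / k.
  apply: divr_ge0 (ltW k0); apply: mulr_ge0; first by apply: mulr_ge0 => //; lra.
  by apply: addr_ge0; [apply: mulr_ge0 => //; lra | lra].
rewrite (_ : 4 * e * L / sl = 4 * w); last by rewrite /w !mulrA.
rewrite [X in _ <= X]addrC; apply: lerD.
  have sqrtE : Num.sqrt (TT * (2 * (dd * l))) = r2 * Num.sqrt (dd * TT * l).
    rewrite (_ : TT * (2 * (dd * l)) = 2 * (dd * TT * l)); last by ring.
    by rewrite sqrtrM ?ler0n // -r2E sqrtr_sqr ger0_norm.
  rewrite sqrtE in SSQ_le; apply: le_trans (ler_wpM2l r20 SSQ_le) _.
  by rewrite mulrA -expr2 r2E.
apply: le_trans (ler_wpM2l C0 SV_le) _.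
have u0 : 0 <= dd * l / k := divr_ge0 (mulr_ge0 d0 l0) (ltW k0).
have -> : 4 * r2 * ((r2 + 1) * bt + 4 * w) / k * (2 * (dd * l)) =
          (8 * (r2 ^+ 2 + r2) * bt + 32 * r2 * w) * (dd * l / k) by ring.
have -> : (32 * b / k + 128 * r2 * L * e / (k * sl)) * dd * l =
          (32 * b + 128 * r2 * w) * (dd * l / k).
  by rewrite /w; field; rewrite !gt_eqF.
rewrite ler_wpM2r // r2E; apply: lerD.
  by apply: le_trans (_ : _ <= 32 * bt) _; [apply: ler_wpM2r => //; lra | apply: ler_wpM2l].
by rewrite ler_wpM2r // ler_wpM2r //; lra.
Qed.

End RegretArithmetic.

Section Trajectory.
Variables (R : realType) (S A : finType) (d : nat)
  (Sr : S -> A -> {set S}) (phi : S -> A -> S -> 'cV[R]_d)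
  (theta_star : 'cV[R]_d) (Lphi Ltheta kappa lambda eta : R) (T : nat)
  (s : nat -> S) (a : nat -> A) (theta_hat : nat -> 'cV[R]_d)
  (Sigma : nat -> 'M[R]_d) (K : nat) (tk : nat -> nat) (beta : nat -> R).
Hypotheses (d_gt0 : (0 < d)%N)
  (phi_le : forall x y z, norm2 (phi x y z) <= Lphi)
  (theta_star_le : norm2 theta_star <= Ltheta)
  (kappa_gt0 : 0 < kappa)
  (kappa_le : forall t, (1 <= t <= T)%N -> forall th, norm2 th <= Ltheta ->
     forall s' s'', s' \in Sr (s t) (a t) -> s'' \in Sr (s t) (a t) ->
       kappa <= mnl_p Sr phi (s t) (a t) th s' * mnl_p Sr phi (s t) (a t) th s'')
  (Sr_n0 : forall x y, exists z, z \in Sr x y)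
  (eta_gt0 : 0 < eta) (lambda_gt0 : 0 < lambda)
  (theta_hat1 : theta_hat 1%N = 0)
  (Sigma1 : Sigma 1%N = lambda%:M)
  (SigmaS : forall t, (1 <= t <= T)%N ->
     Sigma t.+1 = Sigma t + loss_hess Sr phi (s t) (a t) (theta_hat t.+1))
  (omd : forall t, (1 <= t <= T)%N ->
     norm2 (theta_hat t.+1) <= Ltheta /\
     forall th, norm2 th <= Ltheta ->
       omd_obj eta (loss_grad Sr phi (s t) (a t) (s t.+1) (theta_hat t))
               (Sigma t + eta *: loss_hess Sr phi (s t) (a t) (theta_hat t))
               (theta_hat t) (theta_hat t.+1)
       <= omd_obj eta (loss_grad Sr phi (s t) (a t) (s t.+1) (theta_hat t))
               (Sigma t + eta *: loss_hess Sr phi (s t) (a t) (theta_hat t))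
               (theta_hat t) th)
  (tk1 : tk 1%N = 1%N) (tkK : tk K.+1 = T.+1)
  (tk_lt : forall k, (1 <= k <= K)%N -> (tk k < tk k.+1)%N)
  (det_episode : forall k t, (1 <= k <= K)%N -> (tk k < t < tk k.+1)%N ->
     \det (Sigma t) <= 2 * \det (Sigma (tk k)))
  (beta_gt0 : forall t, 0 < beta t)
  (beta_homo : forall t t', (t <= t')%N -> beta t <= beta t')
  (confidence : forall t, (1 <= t <= T)%N ->
     mnorm (Sigma t) (theta_hat t - theta_star) <= beta t)
  (Lphi_le : Lphi ^+ 2 <= lambda).

Local Notation I t := (Sr (s t) (a t)).
Local Notation q t := (mnl_p Sr phi (s t) (a t) (theta_hat t.+1)).
Local Notation z t i :=
  (phi (s t) (a t) i - mnl_mean Sr phi (s t) (a t) (theta_hat t.+1)).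
Local Notation V t := (feature_var Sr phi (s t) (a t) (Sigma t) (theta_hat t.+1)).
Local Notation ell :=
  (ln (1 + T%:R * (Umax Sr)%:R * Lphi ^+ 2 / (lambda * d%:R))).

Let I_n0 t : exists z, z \in I t := Sr_n0 (s t) (a t).
Let Lphi_ge0 : 0 <= Lphi := le_trans (sqrtr_ge0 _) (phi_le (s 0%N) (a 0%N) (s 0%N)).
Let q_ge0 t i : 0 <= q t i.
Proof. by have := mnl_p_ge0 phi (I_n0 t) (theta_hat t.+1) i. Qed.

Lemma SigmaS_cov t : (1 <= t <= T)%N ->
  Sigma t.+1 = Sigma t + \sum_(i <- enum (I t)) q t i *: (z t i *m (z t i)^T).
Proof. by move=> tT; rewrite SigmaS // (loss_hess_cov phi (I_n0 t)) big_enum. Qed.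

Lemma spd_Sigma t : (1 <= t <= T.+1)%N -> spd (Sigma t).
Proof.
elim: t => [//|[|t] IH] /andP[_ tT]; first by rewrite Sigma1; apply: spd_scalar.
have tT' : (1 <= t.+1 <= T)%N by rewrite ltnS in tT; rewrite tT.
rewrite SigmaS_cov //.
have [_ spdS _ _ _] := det_sandwich_add_sum_rank1 (enum (I t.+1)) (fun i => z t.+1 i)
  (IH (ltnW tT')) (q_ge0 t.+1).
exact: spdS.
Qed.

Lemma det_sandwich_Sigma t0 t : (1 <= t0)%N -> (t0 <= t)%N -> (t <= T.+1)%N ->
  det_sandwich (Sigma t0) (Sigma t).
Proof.
move=> t0_ge1; elim: t => [|t IH] t0t tT; first by case: t0 t0_ge1 t0t.
case: (ltngtP t0 t.+1) t0t => // [t0t _|-> _]; last first.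
  by apply/det_sandwich_refl/spd_Sigma; rewrite tT.
have tT' : (1 <= t <= T)%N by rewrite (leq_trans t0_ge1 t0t) -ltnS.
apply: det_sandwich_trans (IH t0t (ltnW tT)) _; rewrite SigmaS_cov //.
apply: det_sandwich_add_sum_rank1 (q_ge0 t).
by apply: spd_Sigma; case/andP: tT' => -> /leqW.
Qed.

Lemma qf_Sigma_ge t x : (1 <= t <= T.+1)%N -> lambda * dotv x x <= msqnorm (Sigma t) x.
Proof.
move=> /andP[t_ge1 tT]; have [_ _ le1t _ _] := det_sandwich_Sigma (leqnn 1) t_ge1 tT.
by rewrite -qf_scalar -Sigma1; apply: le1t.
Qed.

Lemma pd_Sigma t : (1 <= t <= T.+1)%N -> pd (Sigma t).
Proof.
move=> tT x x0; apply: lt_le_trans (qf_Sigma_ge x tT).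
by rewrite mulr_gt0 ?dotv_gt0.
Qed.

(* Since lambda >= Lphi^2, the Hessian step is dominated by Sigma t itself. *)
Lemma feature_var_le_ln_det t : (1 <= t <= T)%N ->
  V t <= 2 * (ln (\det (Sigma t.+1)) - ln (\det (Sigma t))).
Proof.
move=> tT; have tT' : (1 <= t <= T.+1)%N by case/andP: tT => -> /leqW.
have spdS := spd_Sigma tT'.
have := @elliptical_potential _ _ _ (enum (I t)) (q t) (fun i => z t i) _ _ 2
  spdS (q_ge0 t) spdS (ltr0Sn R 1).
rewrite -SigmaS_cov // big_enum; apply => x.
rewrite SigmaS // qf_addM mulr2n mulrDl mul1r lerD2l.
apply: le_trans (qf_loss_hess_le (I_n0 t) (phi_le _ _) _ x) _.
by apply: le_trans (qf_Sigma_ge x tT'); rewrite ler_wpM2r ?dotv_ge0.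
Qed.

Lemma tr_Sigma_le t : (1 <= t <= T.+1)%N ->
  \tr (Sigma t) <= lambda * d%:R + (t.-1)%:R * Lphi ^+ 2.
Proof.
elim: t => [//|[|t] IH] /andP[_ tT].
  by rewrite Sigma1 mxtrace_scalar /= mul0r addr0 mulr_natr.
have tT' : (1 <= t.+1 <= T)%N by rewrite ltnS in tT; rewrite tT.
rewrite SigmaS // raddfD /=.
apply: le_trans (lerD (IH (ltnW tT')) (tr_loss_hess_le (I_n0 t.+1) (phi_le _ _) _)) _.
by rewrite -addrA lerD2l -[(t.+1)%:R]natr1 mulrDl mul1r.
Qed.

Lemma Umax_ge1 : (1 <= Umax Sr)%N.
Proof.
apply: leq_trans (leq_bigmax (s 0%N, a 0%N)).
by case: (I_n0 0%N) => x xI /=; rewrite card_gt0; apply/set0Pn; exists x.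
Qed.

Lemma sum_feature_var_le : \sum_(1 <= t < T.+1) V t <= 2 * (d%:R * ell).
Proof.
have d_gt0R : 0 < d%:R :> R by rewrite ltr0n.
apply: le_trans (_ : _ <= \sum_(1 <= t < T.+1)
    2 * (ln (\det (Sigma t.+1)) - ln (\det (Sigma t)))) _.
  by apply: ler_sum_nat => t tT; apply: feature_var_le_ln_det.
rewrite -mulr_sumr telescope_sumr //; apply: ler_wpM2l => //.
have TT : (1 <= T.+1 <= T.+1)%N by rewrite leqnn.
have [symT _ detT] := spd_Sigma TT.
have lnT := ln_det_le_trace d_gt0 symT (pd_Sigma TT) detT (tr_Sigma_le TT).
have ln1 : ln (\det (Sigma 1%N)) = d%:R * ln lambda.
  by rewrite Sigma1 det_scalar lnXn // mulr_natl.
rewrite ln1; apply: le_trans (lerB lnT (lexx _)) _.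
rewrite -mulrBr; apply: ler_wpM2l; first exact: ltW.
have TL_ge0 : 0 <= T%:R * Lphi ^+ 2 by rewrite mulr_ge0 ?sqr_ge0.
have tau_gt0 : 0 < (lambda * d%:R + T%:R * Lphi ^+ 2) / d%:R.
  by rewrite divr_gt0 // ltr_pwDl ?mulr_gt0.
rewrite -ln_div ?posrE //.
have -> : (lambda * d%:R + T%:R * Lphi ^+ 2) / d%:R / lambda =
          1 + T%:R * Lphi ^+ 2 / (lambda * d%:R) by field; rewrite !gt_eqF.
have Ld_gt0 : 0 < lambda * d%:R by rewrite mulr_gt0.
rewrite ler_ln ?posrE; first last.
- by rewrite ltr_pwDl // divr_ge0 // ?mulr_ge0 ?sqr_ge0 // ltW.
- by rewrite ltr_pwDl // divr_ge0 // ltW.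
rewrite lerD2l ler_pM2r ?invr_gt0 //; apply: ler_wpM2r; first exact: sqr_ge0.
by rewrite ler_peMr ?ler0n // ler1n Umax_ge1.
Qed.

Lemma norm_theta_hat_le t : (1 <= t <= T.+1)%N -> norm2 (theta_hat t) <= Ltheta.
Proof.
case: t => [//|[|t]] /andP[_ tT].
  by rewrite theta_hat1 /norm2 dotv0l sqrtr0 (le_trans (sqrtr_ge0 _) theta_star_le).
have tT' : (1 <= t.+1 <= T)%N by rewrite ltnS in tT; rewrite tT.
by case: (omd tT').
Qed.

(* Comparing the mirror-descent objective at theta_hat t.+1 with its value at
   theta_hat t (which is 0) bounds the step in the Sigma t norm. *)
Lemma mnorm_omd_step_le t : (1 <= t <= T)%N ->
  mnorm (Sigma t) (theta_hat t - theta_hat t.+1) <= 4 * eta * Lphi / Num.sqrt lambda.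
Proof.
move=> tT; have tT' : (1 <= t <= T.+1)%N by case/andP: tT => -> /leqW.
have [_ /(_ _ (norm_theta_hat_le tT'))] := omd tT.
rewrite /omd_obj subrr dotv0r /msqnorm mulmx0 dotv0r mulr0 addr0.
set g := loss_grad _ _ _ _ _ _; set H := loss_hess _ _ _ _ _.
set dl := theta_hat t.+1 - theta_hat t.
rewrite -/(msqnorm _ dl) qf_addM qf_scaleM => obj_le0.
set X := msqnorm (Sigma t) dl in obj_le0 *.
have H_ge0 : 0 <= msqnorm H dl := psd_loss_hess phi (I_n0 t) _ dl.
have g_le : `|dotv g dl| <= 2 * Lphi * norm2 dl.
  apply: le_trans (dotv_le_norm2 g dl) _.
  by rewrite ler_wpM2r ?sqrtr_ge0 // loss_grad_le.
have X_le : X <= 4 * eta * Lphi * norm2 dl.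
  have : (2 * eta)^-1 * X <= 2 * Lphi * norm2 dl.
    have eta2_ge0 : 0 <= (2 * eta)^-1 by rewrite invr_ge0 mulr_ge0 // ltW.
    have := mulr_ge0 eta2_ge0 (mulr_ge0 (ltW eta_gt0) H_ge0).
    have := ler_norm (- dotv g dl); rewrite normrN.
    by move: obj_le0 g_le; rewrite mulrDr; lra.
  have eta2_gt0 : 0 < 2 * eta by rewrite mulr_gt0.
  move=> /(ler_wpM2l (ltW eta2_gt0)); rewrite mulrA mulfV ?gt_eqF // mul1r.
  by rewrite (_ : 4 * eta * Lphi * norm2 dl = 2 * eta * (2 * Lphi * norm2 dl)) //; ring.
rewrite mnormB; apply: (sqrt_le_of_quadratic lambda_gt0 _ _ X_le).
- by rewrite !mulr_ge0 // ltW.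
- exact: sqrtr_ge0.
- by rewrite -dotv_norm2; apply: qf_Sigma_ge.
Qed.


Lemma tk_homo k l : (1 <= k)%N -> (k <= l)%N -> (l <= K.+1)%N -> (tk k <= tk l)%N.
Proof.
move=> k_ge1; elim: l => [|l IH] kl lK; first by case: k k_ge1 kl.
case: (ltngtP k l.+1) kl => // [kl _|-> _]; last exact: leqnn.
apply: leq_trans (IH kl (ltnW lK)) (ltnW (tk_lt _)).
by rewrite (leq_trans k_ge1 kl) -ltnS.
Qed.

Lemma episode_range k t : (1 <= k <= K)%N -> (tk k <= t < tk k.+1)%N ->
  [/\ (1 <= tk k)%N, (1 <= t <= T)%N & (tk k <= T)%N].
Proof.
move=> /andP[k_ge1 kK] /andP[tkt ttk].
have tk_ge1 : (1 <= tk k)%N by rewrite -tk1 tk_homo // leqW.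
have tkS_le : (tk k.+1 <= T.+1)%N by rewrite -tkK tk_homo // leqW.
have tT : (t <= T)%N by rewrite -ltnS (leq_trans ttk tkS_le).
by rewrite tk_ge1 (leq_trans tk_ge1 tkt) tT (leq_trans tkt tT).
Qed.

Lemma det_sandwich_episode k t : (1 <= k <= K)%N -> (tk k <= t < tk k.+1)%N ->
  det_sandwich (Sigma (tk k)) (Sigma t) /\ \det (Sigma t) <= 2 * \det (Sigma (tk k)).
Proof.
move=> kK ep; have [tk_ge1 /andP[_ tT] _] := episode_range kK ep.
have [tkt ttk] := andP ep.
have sand := det_sandwich_Sigma tk_ge1 tkt (leqW tT); split => //.
case: (ltngtP (tk k) t) tkt => // [lt _|<- _]; first by rewrite det_episode // lt.
by have [[_ _ /ltW dA] _ _ _ _] := sand; rewrite ler_peMl ?ler1n.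
Qed.

Local Notation radius :=
  ((Num.sqrt 2 + 1) * beta T + 4 * eta * Lphi / Num.sqrt lambda).

(* theta_hat (tk k) -> theta_star -> theta_hat t -> theta_hat t.+1; the first leg
   is measured in Sigma (tk k), which costs the factor sqrt 2. *)
Lemma mnorm_theta_gap_le k t : (1 <= k <= K)%N -> (tk k <= t < tk k.+1)%N ->
  mnorm (Sigma t) (theta_hat (tk k) - theta_hat t.+1) <= radius.
Proof.
move=> kK ep; have [tk_ge1 tT tkT] := episode_range kK ep.
have [sand det2] := det_sandwich_episode kK ep.
have [_ [sT pT _] _ _ _] := sand.
have -> : theta_hat (tk k) - theta_hat t.+1 = (theta_hat (tk k) - theta_star)
    + ((theta_star - theta_hat t) + (theta_hat t - theta_hat t.+1)).
  by rewrite !addrA !subrK.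
apply: le_trans (mnormD _ _ sT pT) _.
apply: le_trans (lerD (lexx _) (mnormD _ _ sT pT)) _.
rewrite mulrDl mul1r -addrA; apply: lerD; last apply: lerD.
- apply: le_trans (sqrt_le_sqrt2M _ (det_sandwich_qf_le _ sand det2)) _.
    by case: sand => [[_ pK _] _ _ _ _]; apply: pK.
  rewrite ler_wpM2l ?sqrtr_ge0 //; apply: le_trans (confidence _) (beta_homo tkT).
  by rewrite tk_ge1.
- by rewrite mnormB; apply: le_trans (confidence tT) (beta_homo _); case/andP: tT.
- exact: mnorm_omd_step_le.
Qed.

Local Notation bonus_bound t :=
  (Num.sqrt 2 * Num.sqrt (V t) + 4 * Num.sqrt 2 * radius / kappa * V t).

Lemma bonus_le k t : (1 <= k <= K)%N -> (tk k <= t < tk k.+1)%N ->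
  bonus1 Sr phi (beta (tk k)) (Sigma (tk k)) (theta_hat (tk k)) (s t) (a t)
  <= beta T * bonus_bound t.
Proof.
move=> kK ep; have [tk_ge1 tT tkT] := episode_range kK ep.
have tT' : (1 <= t <= T.+1)%N by case/andP: tT => -> /leqW.
have [sand det2] := det_sandwich_episode kK ep.
have [spdK spdT _ _ _] := sand.
set th' := theta_hat (tk k).
set N := fun M i => mnorm (invmx M) (phi (s t) (a t) i - mnl_mean Sr phi (s t) (a t) th').
set B := \sum_(i in I t) mnl_p Sr phi (s t) (a t) th' i * N (Sigma (tk k)) i.
have B_ge0 : 0 <= B by apply: sumr_ge0 => i _; rewrite mulr_ge0 ?sqrtr_ge0 ?mnl_p_ge0.
have B_le : B <= Num.sqrt 2 * \sum_(i in I t) mnl_p Sr phi (s t) (a t) th' i * N (Sigma t) i.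
  rewrite /B mulr_sumr; apply: ler_sum => i _; rewrite mulrCA ler_wpM2l ?mnl_p_ge0 //.
  by apply: sqrt_le_sqrt2M; [apply: qf_inv_ge0 | apply: det_sandwich_qf_inv_le].
have kappa_le' i j : i \in I t -> j \in I t ->
    kappa <= q t i * q t j.
  by move=> iI jI; apply: kappa_le => //; case: (omd tT).
have core := mnl_centered_mnorm_le (I_n0 t) th' spdT kappa_gt0 kappa_le'.
have V_ge0 : 0 <= V t := feature_var_ge0 phi (I_n0 t) _ spdT.
rewrite /bonus1 -/B; apply: le_trans (ler_wpM2r B_ge0 (beta_homo tkT)) _.
apply: ler_wpM2l; first exact: ltW.
apply: le_trans B_le _.
apply: le_trans (ler_wpM2l (sqrtr_ge0 _) core) _; rewrite mulrDr lerD2l.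
have -> : Num.sqrt 2 * (4 * mnorm (Sigma t) (th' - theta_hat t.+1) * V t / kappa)
    = 4 * Num.sqrt 2 / kappa * V t * mnorm (Sigma t) (th' - theta_hat t.+1) by ring.
have -> : 4 * Num.sqrt 2 * radius / kappa * V t = 4 * Num.sqrt 2 / kappa * V t * radius.
  by ring.
apply: ler_wpM2l; last exact: mnorm_theta_gap_le.
by rewrite !mulr_ge0 ?sqrtr_ge0 ?invr_ge0 // ltW.
Qed.

Lemma sum_episodes (f : nat -> R) :
  \sum_(1 <= k < K.+1) \sum_(tk k <= t < tk k.+1) f t = \sum_(1 <= t < T.+1) f t.
Proof.
suff sumK K' : (K' <= K)%N -> \sum_(1 <= k < K'.+1) \sum_(tk k <= t < tk k.+1) f t
                              = \sum_(1 <= t < tk K'.+1) f t.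
  by rewrite sumK // tkK.
elim: K' => [|K' IH] K'K; first by rewrite !big_geq // tk1.
rewrite big_nat_recr //= IH ?(ltnW K'K) // -big_cat_nat //.
- by rewrite -tk1 tk_homo // ltnS ltnW.
- by rewrite ltnW // tk_lt // K'K.
Qed.

Lemma bonus_sum_le :
  \sum_(1 <= k < K.+1) \sum_(tk k <= t < tk k.+1)
      bonus1 Sr phi (beta (tk k)) (Sigma (tk k)) (theta_hat (tk k)) (s t) (a t)
  <= beta T *
     ((32 * beta T / kappa
        + 128 * Num.sqrt 2 * Lphi * eta / (kappa * Num.sqrt lambda))
       * d%:R * ell
      + 2 * Num.sqrt (d%:R * T%:R * ell)).
Proof.
apply: le_trans (_ : _ <= \sum_(1 <= k < K.+1) \sum_(tk k <= t < tk k.+1)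
    beta T * bonus_bound t) _.
  by apply: ler_sum_nat => k kK; apply: ler_sum_nat => t ep; apply: bonus_le.
rewrite sum_episodes -mulr_sumr big_split /= -!mulr_sumr.
have V_ge0 t : (1 <= t < T.+1)%N -> 0 <= V t.
  move=> tT; have tT' : (1 <= t <= T.+1)%N by case/andP: tT => -> /leqW.
  by have := feature_var_ge0 phi (I_n0 t) (theta_hat t.+1) (spd_Sigma tT').
have ell_ge0 : 0 <= ell.
  apply: ln_ge0; rewrite lerDl; apply: divr_ge0.
  - by rewrite !mulr_ge0 ?ler0n ?sqr_ge0.
  - by rewrite mulr_ge0 ?ler0n // ltW.
have sumV_ge0 : 0 <= \sum_(1 <= t < T.+1) V t.
  by rewrite big_nat_cond sumr_ge0 // => t /andP[tT _]; apply: V_ge0.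
have sum_sqrt := sum_sqrt_le V_ge0 sum_feature_var_le; rewrite subn1 /= in sum_sqrt.
apply: (regret_arith (ltW (beta_gt0 T)) (lexx _) _ (sqrtr_ge0 2) _ kappa_gt0
  (ler0n _ d) ell_ge0 (ler0n _ T) eta_gt0 Lphi_ge0 sumV_ge0 sum_feature_var_le sum_sqrt).
- by rewrite sqr_sqrtr ?ler0n.
- by rewrite sqrtr_gt0.
Qed.

End Trajectory.

Unset Implicit Arguments.

Theorem lemma19 (R : realType) (S A : finType) (d : nat)
  (Sr : S -> A -> {set S}) (phi : S -> A -> S -> 'cV[R]_d)
  (theta_star : 'cV[R]_d) (Lphi Ltheta kappa lambda eta : R) (T : nat)
  (s : nat -> S) (a : nat -> A) (theta_hat : nat -> 'cV[R]_d)
  (Sigma : nat -> 'M[R]_d) (K : nat) (tk : nat -> nat) (beta : nat -> R) :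
  (0 < d)%N -> (0 < T)%N ->
  (* (A1) *)
  (forall x y z, norm2 (phi x y z) <= Lphi) ->
  norm2 theta_star <= Ltheta ->
  (* (A2) *)
  0 < kappa < 1 ->
  (forall t, (1 <= t <= T)%N -> forall th, norm2 th <= Ltheta ->
     forall s' s'', s' \in Sr (s t) (a t) -> s'' \in Sr (s t) (a t) ->
       kappa <= mnl_p Sr phi (s t) (a t) th s' * mnl_p Sr phi (s t) (a t) th s'') ->
  (* (A3) *)
  (forall x y, exists2 z, z \in Sr x y & phi x y z = 0) ->
  (* trajectory transitions stay in the reachable sets *)
  (forall t, (1 <= t <= T)%N -> s t.+1 \in Sr (s t) (a t)) ->
  (* online estimator *)
  0 < eta -> 0 < lambda ->
  theta_hat 1%N = 0 ->
  Sigma 1%N = lambda%:M ->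
  (forall t, (1 <= t <= T)%N ->
     Sigma t.+1 = Sigma t + loss_hess Sr phi (s t) (a t) (theta_hat t.+1)) ->
  (forall t, (1 <= t <= T)%N ->
     norm2 (theta_hat t.+1) <= Ltheta /\
     forall th, norm2 th <= Ltheta ->
       omd_obj eta (loss_grad Sr phi (s t) (a t) (s t.+1) (theta_hat t))
               (Sigma t + eta *: loss_hess Sr phi (s t) (a t) (theta_hat t))
               (theta_hat t) (theta_hat t.+1)
       <= omd_obj eta (loss_grad Sr phi (s t) (a t) (s t.+1) (theta_hat t))
               (Sigma t + eta *: loss_hess Sr phi (s t) (a t) (theta_hat t))
               (theta_hat t) th) ->
  (* episodes k = 1..K starting at tk k, with tk 1 = 1, tk (K+1) = T+1 *)
  (1 <= K)%N -> tk 1%N = 1%N -> tk K.+1 = T.+1 ->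
  (forall k, (1 <= k <= K)%N -> (tk k < tk k.+1)%N) ->
  (forall k t, (1 <= k <= K)%N -> (tk k < t < tk k.+1)%N ->
     \det (Sigma t) <= 2 * \det (Sigma (tk k))) ->
  (forall k, (1 <= k < K)%N ->
     2 * \det (Sigma (tk k)) < \det (Sigma (tk k.+1))) ->
  (* confidence radii *)
  (forall t, 0 < beta t) ->
  (forall t t', (t <= t')%N -> beta t <= beta t') ->
  (forall t, (1 <= t <= T)%N ->
     mnorm (Sigma t) (theta_hat t - theta_star) <= beta t) ->
  Lphi ^+ 2 <= lambda ->
  \sum_(1 <= k < K.+1) \sum_(tk k <= t < tk k.+1)
      bonus1 Sr phi (beta (tk k)) (Sigma (tk k)) (theta_hat (tk k)) (s t) (a t)
  <= beta T *
     ((32 * beta T / kappa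
        + 128 * Num.sqrt 2 * Lphi * eta / (kappa * Num.sqrt lambda))
       * d%:R * ln (1 + T%:R * (Umax Sr)%:R * Lphi ^+ 2 / (lambda * d%:R))
      + 2 * Num.sqrt (d%:R * T%:R
              * ln (1 + T%:R * (Umax Sr)%:R * Lphi ^+ 2 / (lambda * d%:R)))).
Proof.
move=> d_gt0 _ phi_le theta_star_le /andP[kappa_gt0 _] kappa_le A3 _ eta_gt0
  lambda_gt0 theta_hat1 Sigma1 SigmaS omd _ tk1 tkK tk_lt det_episode _
  beta_gt0 beta_homo confidence Lphi_le.
have Sr_n0 x y : exists z, z \in Sr x y by have [z zS _] := A3 x y; exists z.
exact: (bonus_sum_le d_gt0 phi_le theta_star_le kappa_gt0 kappa_le Sr_n0 eta_gt0
  lambda_gt0 theta_hat1 Sigma1 SigmaS omd tk1 tkK tk_lt det_episode beta_gt0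
  beta_homo confidence Lphi_le).
Qed.
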